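(* Let $\hat{\mathfrak{so}}$ be the extended Schr\''odinger-Virasoro algebra over $\mathbb{C}$ and, for $g\in\frac12\mathbb{Z}$, let $\Delta_g(\hat{\mathfrak{so}})$ be the space of $\frac12$-derivations of $\hat{\mathfrak{so}}$ of degree $g$. Then $\Delta_0(\hat{\mathfrak{so}})=\langle \mathrm{Id}\rangle$ (the scalar multiples of the identity map) and $\Delta_j(\hat{\mathfrak{so}})=0$ for every $j\in\mathbb{Z}\setminus\{0\}$.
   Context: The extended Schr\''odinger-Virasoro algebra $\hat{\mathfrak{so}}$ is the complex Lie algebra with basis $\{L_n,M_n,N_n,Y_{n+\frac12},C_L,C_{LN},C_N\mid n\in\mathbb{Z}\}$ and brackets (all others zero, $C_L,C_{LN},C_N$ central): $[L_m,L_n]=(n-m)L_{m+n}+\delta_{m+n,0}\frac{m^3-m}{12}C_L$, $[L_m,M_n]=nM_{m+n}$, $[L_m,N_n]=nN_{m+n}+\delta_{m+n,0}(m^2-m)C_{LN}$, $[N_m,M_n]=2M_{m+n}$, $[L_m,Y_{n+\frac12}]=(n+\frac{1-m}{2})Y_{m+n+\frac12}$, $[N_m,Y_{n+\frac12}]=Y_{m+n+\frac12}$, $[Y_{m+\frac12},Y_{n+\frac12}]=(m-n)M_{m+n+1}$, $[N_m,N_n]=n\delta_{m+n,0}C_N$, for all $m,n\in\mathbb{Z}$. It is $\frac12\mathbb{Z}$-graded by $\hat{\mathfrak{so}}_0=\langle L_0,M_0,N_0,C_L,C_{LN},C_N\rangle$, $\hat{\mathfrak{so}}_n=\langle L_n,M_n,N_n\rangle$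 for $n\in\mathbb{Z}\setminus\{0\}$, $\hat{\mathfrak{so}}_{n+\frac12}=\langle Y_{n+\frac12}\rangle$. A $\frac12$-derivation of a Lie algebra $L$ is a linear map $\varphi:L\to L$ with $\varphi([x,y])=\frac12([\varphi(x),y]+[x,\varphi(y)])$ for all $x,y$. A $\frac12$-derivation $\varphi$ has degree $g$ if $\varphi(\hat{\mathfrak{so}}_h)\subseteq\hat{\mathfrak{so}}_{g+h}$ for all $h\in\frac12\mathbb{Z}$. *)

From HB Require Import structures.
From mathcomp Require Import all_boot all_order all_algebra.
From mathcomp Require Import finmap.
From mathcomp.multinomials Require Import monalg.
From mathcomp.real_closed Require Export complex.
From mathcomp Require Export reals.

Set Implicit Arguments.
Unset Strict Implicit.
Unset Printing Implicit Defensive.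

Import Order.TTheory GRing.Theory Num.Theory.
Local Open Scope ring_scope.

(* Basis of the extended Schroedinger-Virasoro algebra.
   [Y n] stands for Y_{n+1/2}. *)
Inductive sv_basis : Type :=
  | bL of int | bM of int | bN of int | bY of int
  | bCL | bCLN | bCN.

Definition sv_code (b : sv_basis) : nat * int :=
  match b with
  | bL n => (0%N, n) | bM n => (1%N, n) | bN n => (2%N, n) | bY n => (3%N, n)
  | bCL => (4%N, 0) | bCLN => (5%N, 0) | bCN => (6%N, 0)
  end.

Definition sv_decode (p : nat * int) : option sv_basis :=
  match p with
  | (0%N, n) => Some (bL n) | (1%N, n) => Some (bM n)
  | (2%N, n) => Some (bN n) | (3%N, n) => Some (bY n)
  | (4%N, _) => Some bCL | (5%N, _) => Some bCLN | (6%N, _) => Some bCN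
  | _ => None
  end.

Lemma sv_codeK : pcancel sv_code sv_decode.
Proof. by case. Qed.

HB.instance Definition _ := Countable.copy sv_basis (pcan_type sv_codeK).

Definition sv (K : fieldType) := {malg K[sv_basis]}.

Section SV.
Variable K : fieldType.

Local Notation e b := (<< b >> : sv K).
Local Notation "c *e b" := (c *: (<< b >> : sv K)) (at level 40).

Definition dlt (a b : int) : K := (a == b)%:R.

Definition sv_br_basis (a b : sv_basis) : sv K :=
  match a, b with
  | bL m, bL n => (n - m)%:~R *e bL (m + n)
                   + (dlt (m + n) 0 * ((m ^+ 3 - m)%:~R / 12%:R)) *e bCL
  | bL m, bM n => n%:~R *e bM (m + n)
  | bM n, bL m => - (n%:~R *e bM (m + n))
  | bL m, bN n => n%:~R *e bN (m + n) + (dlt (m + n) 0 * (m ^+ 2 - m)%:~R) *e bCLN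
  | bN n, bL m => - (n%:~R *e bN (m + n) + (dlt (m + n) 0 * (m ^+ 2 - m)%:~R) *e bCLN)
  | bN m, bM n => 2%:R *e bM (m + n)
  | bM n, bN m => - (2%:R *e bM (m + n))
  | bL m, bY n => (n%:~R + (1 - m)%:~R / 2%:R) *e bY (m + n)
  | bY n, bL m => - ((n%:~R + (1 - m)%:~R / 2%:R) *e bY (m + n))
  | bN m, bY n => e (bY (m + n))
  | bY n, bN m => - e (bY (m + n))
  | bY m, bY n => (m - n)%:~R *e bM (m + n + 1)
  | bN m, bN n => (n%:~R * dlt (m + n) 0) *e bCN
  | _, _ => 0
  end.

Definition sv_br (x y : sv K) : sv K :=
  \sum_(a <- msupp x) \sum_(b <- msupp y) (x@_a * y@_b) *: sv_br_basis a b.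

(* twice the degree of a basis element (the grading is by 1/2 Z) *)
Definition deg2 (b : sv_basis) : int :=
  match b with
  | bL n | bM n | bN n => 2 * n
  | bY n => 2 * n + 1
  | _ => 0
  end.

(* x lies in the homogeneous component so_{h/2} *)
Definition homog2 (h : int) (x : sv K) : bool :=
  all (fun b => deg2 b == h) (msupp x).

Definition half_derivation (phi : {linear sv K -> sv K}) : Prop :=
  forall x y : sv K,
    phi (sv_br x y) = 2%:R^-1 *: (sv_br (phi x) y + sv_br x (phi y)).

(* phi has degree g2/2 *)
Definition has_degree2 (g2 : int) (phi : {linear sv K -> sv K}) : Prop :=
  forall (h : int) (x : sv K), homog2 h x -> homog2 (g2 + h) (phi x).

End SV.

From HB Require Import structures.
From mathcomp Require Import all_boot all_order all_algebra.
From mathcomp Require Import finmap.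
From mathcomp.multinomials Require Import monalg.
From mathcomp.real_closed Require Import complex.
From mathcomp Require Import reals.
From mathcomp Require Import zify ring.
Set Implicit Arguments.
Unset Strict Implicit.
Unset Printing Implicit Defensive.
Import GRing.Theory Num.Theory.
Local Open Scope ring_scope.
Local Open Scope complex_scope.

(* Since [ad L_0] acts on the component of degree [h] as multiplication by [h],
   applying a 1/2-derivation [phi] of degree [g] to [[L_0, x]] gives
   [(h - g) phi(x) = [phi(L_0), x]] for [x] of degree [h] ([deg2] is twice the
   degree).  So [phi] is governed by [phi(L_0)]; moreover the
   bracket of two vectors on which [phi] acts by the same scalar is again
   acted on by that scalar.
   For [g = j <> 0], write [phi(L_0) = a L_j + b M_j + c N_j]; testing at [L_j]
   kills [b] and [c], and the rule on [(N_0, M_{-j})], where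
   [phi(N_0) = 0] and [phi(M_{-j}) = a/2 M_0], forces [a = 0].  Hence [phi]
   vanishes off degree [j], and degree [j] is spanned by brackets
   [[L_{2j}, X_{-j}]] of vectors killed by [phi].
   For [g = 0], testing at [N_0] and [M_0] shows that [phi(L_0) - a L_0] is
   central, so [phi = a] on all components of nonzero degree, and every basis
   vector of degree 0 occurs in a bracket of two such components. *)

Section Bracket.
Variable K : numFieldType.
Local Notation E b := (<< b >> : sv K).
Implicit Types x y : sv K.

Lemma sv_brEw x y (dx dy : {fset sv_basis}) :
  (msupp x `<=` dx)%fset -> (msupp y `<=` dy)%fset ->
  sv_br x y = \sum_(a <- dx) \sum_(b <- dy) (x@_a * y@_b) *: sv_br_basis K a b.
Proof.
move=> sx sy; rewrite /sv_br (big_fset_incl _ sx); last first.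
  by move=> a _ /mcoeff_outdom ->; rewrite big1 // => b _; rewrite mul0r scale0r.
apply: eq_bigr => a _; apply: big_fset_incl sy _ => b _ /mcoeff_outdom ->.
by rewrite mulr0 scale0r.
Qed.

Lemma sv_brDl x x' y : sv_br (x + x') y = sv_br x y + sv_br x' y.
Proof.
pose d : {fset sv_basis} := (msupp x `|` msupp x')%fset.
rewrite !(@sv_brEw _ _ d (msupp y)) ?fsubset_refl ?fsubsetUl ?fsubsetUr ?msuppD_le //.
rewrite -big_split; apply: eq_bigr => a _; rewrite -big_split; apply: eq_bigr => b _.
by rewrite mcoeffD mulrDl scalerDl.
Qed.

Lemma sv_brDr x y y' : sv_br x (y + y') = sv_br x y + sv_br x y'.
Proof.
pose d : {fset sv_basis} := (msupp y `|` msupp y')%fset.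
rewrite !(@sv_brEw _ _ (msupp x) d) ?fsubset_refl ?fsubsetUl ?fsubsetUr ?msuppD_le //.
rewrite -big_split; apply: eq_bigr => a _; rewrite -big_split; apply: eq_bigr => b _.
by rewrite mcoeffD mulrDr scalerDl.
Qed.

Lemma sv_brZl c x y : sv_br (c *: x) y = c *: sv_br x y.
Proof.
rewrite !(@sv_brEw _ _ (msupp x) (msupp y)) ?fsubset_refl ?msuppZ_le //.
rewrite scaler_sumr; apply: eq_bigr => a _; rewrite scaler_sumr; apply: eq_bigr => b _.
by rewrite mcoeffZ -mulrA scalerA.
Qed.

Lemma sv_brZr c x y : sv_br x (c *: y) = c *: sv_br x y.
Proof.
rewrite !(@sv_brEw _ _ (msupp x) (msupp y)) ?fsubset_refl ?msuppZ_le //.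
rewrite scaler_sumr; apply: eq_bigr => a _; rewrite scaler_sumr; apply: eq_bigr => b _.
by rewrite mcoeffZ mulrCA scalerA.
Qed.

Lemma sv_br0l y : sv_br 0 y = 0.
Proof. by have := sv_brZl 0 0 y; rewrite !scale0r. Qed.

Lemma sv_br0r x : sv_br x 0 = 0.
Proof. by have := sv_brZr 0 x 0; rewrite !scale0r. Qed.

Lemma sv_br_sumr I (r : seq I) (P : pred I) (F : I -> sv K) x :
  sv_br x (\sum_(i <- r | P i) F i) = \sum_(i <- r | P i) sv_br x (F i).
Proof. by elim/big_rec2: _ => [|i a b _ <-]; rewrite ?sv_br0r ?sv_brDr. Qed.

Lemma malgZU (c : K) b : << c *g b >> = c *: E b.
Proof.
apply/malgP => k; rewrite mcoeffZ !mcoeffU.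
by case: (b == k); rewrite ?mulr1 ?mulr0.
Qed.

Lemma msupp_svU b : msupp (E b) = [fset b]%fset.
Proof. by rewrite msuppU oner_eq0. Qed.

Lemma svU_neq0 b : E b != 0.
Proof.
by apply/eqP => /(congr1 (mcoeff b)); rewrite mcoeffUU mcoeff0 => /eqP; rewrite oner_eq0.
Qed.

Lemma sv_brUU a b : sv_br (E a) (E b) = sv_br_basis K a b.
Proof. by rewrite /sv_br !msupp_svU !big_seq_fset1 !mcoeffUU mulr1 scale1r. Qed.

Lemma monalgEZ x : x = \sum_(k <- msupp x) x@_k *: E k.
Proof. by rewrite {1}[x]monalgE; apply: eq_bigr => k _; rewrite malgZU. Qed.

Lemma mcoeffU1_mul x b k : x@_b * (E b)@_k = (b == k)%:R * x@_k.
Proof. by rewrite mcoeffU; case: eqP => [->|]; rewrite ?mulr1 ?mul1r ?mulr0 ?mul0r. Qed.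

Lemma sv_brLL_opp m : sv_br (E (bL m)) (E (bL (- m))) =
  (- (2 * m))%:~R *: E (bL 0) + ((m ^+ 3 - m)%:~R / 12%:R) *: E bCL.
Proof.
rewrite sv_brUU /= addrN /dlt eqxx mul1r.
by have -> : - m - m = - (2 * m) by lia.
Qed.

Lemma sv_brLM_opp m : sv_br (E (bL m)) (E (bM (- m))) = (- m)%:~R *: E (bM 0).
Proof. by rewrite sv_brUU /= addrN. Qed.

Lemma sv_brLN_opp m : sv_br (E (bL m)) (E (bN (- m))) =
  (- m)%:~R *: E (bN 0) + (m ^+ 2 - m)%:~R *: E bCLN.
Proof. by rewrite sv_brUU /= addrN /dlt eqxx mul1r. Qed.

Lemma sv_brNN_opp m : sv_br (E (bN m)) (E (bN (- m))) = (- m)%:~R *: E bCN.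
Proof. by rewrite sv_brUU /= addrN /dlt eqxx mulr1. Qed.

Lemma linear_basis_scale (phi : {linear sv K -> sv K}) (a : K) :
  (forall b, phi (E b) = a *: E b) -> forall x, phi x = a *: x.
Proof.
move=> phiE x; rewrite (monalgEZ x) linear_sum scaler_sumr; apply: eq_bigr => k _.
by rewrite linearZ /= phiE !scalerA mulrC.
Qed.

End Bracket.

Section Grading.
Variable K : numFieldType.
Local Notation E b := (<< b >> : sv K).
Implicit Types x y : sv K.

Lemma homog2U b : homog2 (deg2 b) (E b).
Proof. by apply/allP => k; rewrite msupp_svU inE => /eqP ->. Qed.

Lemma homog2_mem h y k : homog2 h y -> k \in msupp y -> deg2 k = h.
Proof. by move/allP => hy /hy /eqP. Qed.

Lemma homog2Z h c y : homog2 h y -> homog2 h (c *: y).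
Proof. by move/allP => hy; apply/allP => k /(fsubsetP (msuppZ_le c y)) /hy. Qed.

Lemma sv_brL0U b : sv_br (E (bL 0)) (E b) = ((deg2 b)%:~R / 2%:R) *: E b.
Proof.
rewrite sv_brUU; case: b => [n|n|n|n|||] /=;
  rewrite ?add0r ?subr0 ?expr0n /= ?subrr ?mul0r ?mulr0 ?scale0r ?addr0 //;
  by congr (_ *: _); rewrite ?(intrM, intrD, intrB); field.
Qed.

Lemma sv_brL0_homog2 h y : homog2 h y -> sv_br (E (bL 0)) y = (h%:~R / 2%:R) *: y.
Proof.
move=> hy; rewrite [in LHS](monalgEZ y) [in RHS](monalgEZ y) sv_br_sumr scaler_sumr.
apply: eq_big_seq => b yb; rewrite sv_brZr sv_brL0U (homog2_mem hy yb) !scalerA.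
by rewrite mulrC.
Qed.

Lemma homog2_evenE j y : j != 0 -> homog2 (2 * j) y ->
  y = y@_(bL j) *: E (bL j) + y@_(bM j) *: E (bM j) + y@_(bN j) *: E (bN j).
Proof.
move=> j_neq0 hy; apply/malgP => k; rewrite !mcoeffD !mcoeffZ !mcoeffU1_mul -!mulrDl.
have [yk|yk] := boolP (k \in msupp y); last by rewrite (mcoeff_outdom yk) mulr0.
have := homog2_mem hy yk; case: k yk => [n|n|n|n|||] _ /= hn; try (exfalso; lia).
all: have -> : n = j by lia.
all: by rewrite eqxx ?addr0 ?add0r mul1r.
Qed.

Lemma homog2_0E y : homog2 0 y ->
  y = y@_(bL 0) *: E (bL 0) + y@_(bM 0) *: E (bM 0) + y@_(bN 0) *: E (bN 0)
    + y@_bCL *: E bCL + y@_bCLN *: E bCLN + y@_bCN *: E bCN.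
Proof.
move=> hy; apply/malgP => k; rewrite !mcoeffD !mcoeffZ !mcoeffU1_mul -!mulrDl.
have [yk|yk] := boolP (k \in msupp y); last by rewrite (mcoeff_outdom yk) mulr0.
have := homog2_mem hy yk; case: k yk => [n|n|n|n|||] _ /= hn; try (exfalso; lia).
all: try have -> : n = 0 by lia.
all: by rewrite ?eqxx ?addr0 ?add0r mul1r.
Qed.

End Grading.

Section HalfDerivation.
Variable K : numFieldType.
Local Notation E b := (<< b >> : sv K).
Implicit Types x y : sv K.

Lemma two_neq0 : (2%:R : K) != 0.
Proof. by rewrite pnatr_eq0. Qed.

Lemma scale_half_derivation (c : K) (phi : {linear sv K -> sv K}) :
  (forall x, phi x = c *: x) -> half_derivation phi /\ has_degree2 0 phi.
Proof.
move=> phiE; split=> [x y|h x hx]; last by rewrite phiE add0r homog2Z.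
rewrite !phiE sv_brZl sv_brZr scalerDr !scalerA -scalerDl.
by congr (_ *: _); field.
Qed.

Variable phi : {linear sv K -> sv K}.
Hypothesis phi_half : half_derivation phi.

Lemma half_derivation_br_scale (a : K) x y : phi x = a *: x -> phi y = a *: y ->
  phi (sv_br x y) = a *: sv_br x y.
Proof.
move=> phix phiy; rewrite phi_half phix phiy sv_brZl sv_brZr -scalerDl scalerA.
by congr (_ *: _); field.
Qed.

Lemma half_derivation_adL0 g2 : has_degree2 g2 phi -> forall b,
  (deg2 b - g2)%:~R *: phi (E b) = 2%:R *: sv_br (phi (E (bL 0))) (E b).
Proof.
move=> phi_deg b; have := phi_half (E (bL 0)) (E b).
rewrite sv_brL0U linearZ /= (sv_brL0_homog2 (phi_deg _ _ (homog2U K b))).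
set v := phi (E b); set w := sv_br _ (E b) => h.
have -> : w = 2%:R *: (((deg2 b)%:~R / 2%:R) *: v) - ((g2 + deg2 b)%:~R / 2%:R) *: v.
  by rewrite h scalerA mulfV ?two_neq0 // scale1r addrK.
rewrite scalerBr !scalerA -scalerBl; congr (_ *: _).
by rewrite ?(intrD, intrB); field.
Qed.

Lemma half_derivation_L0_br g2 b : has_degree2 g2 phi -> deg2 b = g2 ->
  sv_br (phi (E (bL 0))) (E b) = 0.
Proof.
move=> phi_deg deg_b; apply: (scalerI two_neq0).
by rewrite -(half_derivation_adL0 phi_deg) deg_b subrr !scale0r scaler0.
Qed.

End HalfDerivation.

Section NonzeroDegree.
Variable K : numFieldType.
Local Notation E b := (<< b >> : sv K).
Variables (j : int) (phi : {linear sv K -> sv K}).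
Hypotheses (j_neq0 : j != 0) (phi_half : half_derivation phi)
  (phi_deg : has_degree2 (2 * j) phi).

Let adL0 := half_derivation_adL0 phi_half phi_deg.

Let dlt_j0 : dlt K j 0 = 0.
Proof. by rewrite /dlt (negbTE j_neq0). Qed.

Lemma phiL0_colinear_Lj : exists a, phi (E (bL 0)) = a *: E (bL j).
Proof.
have := phi_deg (homog2U K (bL 0)); rewrite /= mulr0 addr0 => /(homog2_evenE j_neq0).
have := half_derivation_L0_br phi_half phi_deg (erefl : deg2 (bL j) = 2 * j).
move: (phi (E (bL 0))) => u ubr udec; exists u@_(bL j).
move: ubr; rewrite {1}udec !sv_brDl !sv_brZl !sv_brUU /= => ubr.
have [coefM coefN] := (congr1 (mcoeff (bM (j + j))) ubr, congr1 (mcoeff (bN (j + j))) ubr).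
move: coefM coefN; rewrite !(mcoeffD, mcoeffN, mcoeffZ, mcoeffU, mcoeff0) /= !eqxx /= !mulr1n.
rewrite !(mulr0, addr0, add0r, mulr1, oppr0) => /eqP + /eqP.
rewrite !mulf_eq0 !oppr_eq0 intr_eq0 (negbTE j_neq0) !orbF => /eqP uM /eqP uN.
by rewrite {1}udec uM uN !scale0r !addr0.
Qed.

Lemma phiL0_eq0 : phi (E (bL 0)) = 0.
Proof.
have [a phiL0] := phiL0_colinear_Lj.
have phiN0 : phi (E (bN 0)) = 0.
  apply: (scalerI (a := ((deg2 (bN 0) - 2 * j)%:~R : K))).
    by rewrite intr_eq0 /=; lia.
  by rewrite adL0 phiL0 sv_brZl sv_brUU /= addr0 dlt_j0 mul0r !scale0r addr0 !scaler0.
have phiM : phi (E (bM (- j))) = (a / 2%:R) *: E (bM 0).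
  apply: (scalerI (a := ((deg2 (bM (- j)) - 2 * j)%:~R : K))).
    by rewrite intr_eq0 /=; lia.
  rewrite [LHS]adL0 phiL0 sv_brZl sv_brUU /= addrN !scalerA; congr (_ *: _).
  by rewrite !(intrD, intrM, intrN); field.
have := phi_half (E (bN 0)) (E (bM (- j))).
rewrite sv_brUU /= linearZ /= add0r phiN0 sv_br0l add0r phiM sv_brZr sv_brUU /= add0r.
rewrite !scalerA => /eqP; rewrite -subr_eq0 -scalerBl scaler_eq0.
rewrite (negbTE (svU_neq0 K _)) orbF (_ : _ - _ = a / 2%:R); last by field.
rewrite mulf_eq0 invr_eq0 (negbTE (two_neq0 K)) orbF => /eqP a0.
by rewrite phiL0 a0 scale0r.
Qed.

Lemma phiU_off_degree_eq0 b : deg2 b != 2 * j -> phi (E b) = 0.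
Proof.
move=> hb; apply: (scalerI (a := ((deg2 b - 2 * j)%:~R : K))).
  by rewrite intr_eq0 subr_eq0.
by rewrite adL0 phiL0_eq0 sv_br0l !scaler0.
Qed.

Lemma phi_brL2j_eq0 b : deg2 b = - (2 * j) -> phi (sv_br (E (bL (2 * j))) (E b)) = 0.
Proof.
move=> deg_b; rewrite (@half_derivation_br_scale _ _ phi_half 0) ?scale0r //;
  by apply: phiU_off_degree_eq0; rewrite ?deg_b /=; lia.
Qed.

Lemma nonzero_degree_half_derivation_eq0 x : phi x = 0.
Proof.
rewrite -(scale0r x); apply: linear_basis_scale x => b; rewrite scale0r.
have [deg_b|] := eqVneq (deg2 b) (2 * j); last exact: phiU_off_degree_eq0.
have two_j_sub_j : 2 * j + - j = j by lia.
case: b deg_b => [n|n|n|n|||] /= deg_b; try lia; have -> : n = j by lia.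
- have := @phi_brL2j_eq0 (bL (- j)) (mulrN 2 j).
  rewrite sv_brUU /= two_j_sub_j dlt_j0 mul0r scale0r addr0 linearZ /= => /eqP.
  by rewrite scaler_eq0 intr_eq0 => /orP [|/eqP //]; lia.
- have := @phi_brL2j_eq0 (bM (- j)) (mulrN 2 j).
  rewrite sv_brUU /= two_j_sub_j linearZ /= => /eqP.
  by rewrite scaler_eq0 intr_eq0 => /orP [|/eqP //]; lia.
- have := @phi_brL2j_eq0 (bN (- j)) (mulrN 2 j).
  rewrite sv_brUU /= two_j_sub_j dlt_j0 mul0r scale0r addr0 linearZ /= => /eqP.
  by rewrite scaler_eq0 intr_eq0 => /orP [|/eqP //]; lia.
Qed.

End NonzeroDegree.

Section DegreeZero.
Variable K : numFieldType.
Local Notation E b := (<< b >> : sv K).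
Variable phi : {linear sv K -> sv K}.
Hypotheses (phi_half : half_derivation phi) (phi_deg : has_degree2 0 phi).

Let adL0 := half_derivation_adL0 phi_half phi_deg.

Lemma phiL0_deg0_central : exists a, exists2 z,
  phi (E (bL 0)) = a *: E (bL 0) + z & forall b, sv_br z (E b) = 0.
Proof.
have := phi_deg (homog2U K (bL 0)); rewrite /= mulr0 addr0 => /homog2_0E.
have brN := half_derivation_L0_br phi_half phi_deg (erefl : deg2 (bN 0) = 0).
have brM := half_derivation_L0_br phi_half phi_deg (erefl : deg2 (bM 0) = 0).
move: (phi (E (bL 0))) brN brM => u brN brM udec.
have uM : u@_(bM 0) = 0.
  move: brN; rewrite {1}udec !sv_brDl !sv_brZl !sv_brUU /=.
  rewrite !mulr0z mulr0 mul0r !scale0r addr0 !scaler0 ?addr0 ?add0r => /eqP.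
  rewrite scalerN oppr_eq0 scalerA scaler_eq0 (negbTE (svU_neq0 K _)) orbF.
  by rewrite mulf_eq0 (negbTE (two_neq0 K)) orbF => /eqP.
have uN : u@_(bN 0) = 0.
  move: brM; rewrite {1}udec !sv_brDl !sv_brZl !sv_brUU /=.
  rewrite mulr0z scale0r !scaler0 !addr0 ?add0r => /eqP.
  rewrite scalerA scaler_eq0 (negbTE (svU_neq0 K _)) orbF.
  by rewrite mulf_eq0 (negbTE (two_neq0 K)) orbF => /eqP.
exists u@_(bL 0); exists (u@_bCL *: E bCL + u@_bCLN *: E bCLN + u@_bCN *: E bCN).
  by rewrite {1}udec uM uN !scale0r !addr0 !addrA.
by move=> b; rewrite !sv_brDl !sv_brZl !sv_brUU /= !scaler0 !addr0.
Qed.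

Lemma phiU_nonzero_degree_scale : exists a, forall b, deg2 b != 0 -> phi (E b) = a *: E b.
Proof.
have [a [z phiL0 z_central]] := phiL0_deg0_central.
exists a => b deg_b; apply: (scalerI (a := ((deg2 b)%:~R : K))); first by rewrite intr_eq0.
have := adL0 b; rewrite subr0 => ->.
rewrite phiL0 sv_brDl z_central addr0 sv_brZl sv_brL0U !scalerA; congr (_ *: _).
by field.
Qed.

Section Eigenvalue.
Variable a : K.
Hypothesis phiU_nz : forall b, deg2 b != 0 -> phi (E b) = a *: E b.

Lemma phiU_scale_of_br p q b c r : deg2 p != 0 -> deg2 q != 0 -> c != 0 ->
  phi r = a *: r -> sv_br (E p) (E q) = r + c *: E b -> phi (E b) = a *: E b.
Proof.
move=> /phiU_nz phip /phiU_nz phiq c_neq0 phir brE.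
have := half_derivation_br_scale phi_half phip phiq.
rewrite brE linearD linearZ /= phir scalerDr => /addrI.
by rewrite !scalerA mulrC -scalerA => /(scalerI c_neq0).
Qed.

Lemma phiU_scale b : phi (E b) = a *: E b.
Proof.
have [/phiU_nz //|] := boolP (deg2 b != 0); rewrite negbK => /eqP deg_b.
have phi0 : phi 0 = a *: 0 by rewrite linear0 scaler0.
have phiL0 : phi (E (bL 0)) = a *: E (bL 0).
  apply: (@phiU_scale_of_br (bL 1) (bL (- 1)) _ (- 2%:R) 0) => //.
    by rewrite oppr_eq0 two_neq0.
  by rewrite sv_brLL_opp expr1n subrr mul0r scale0r addr0 add0r.
have phiN0 : phi (E (bN 0)) = a *: E (bN 0).
  apply: (@phiU_scale_of_br (bL 1) (bN (- 1)) _ (- 1) 0) => //.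
    by rewrite oppr_eq0 oner_eq0.
  by rewrite sv_brLN_opp expr1n subrr scale0r addr0 add0r.
case: b deg_b => [n|n|n|n|||] /= deg_b; try lia; try have -> : n = 0 by lia.
- exact: phiL0.
- apply: (@phiU_scale_of_br (bL 1) (bM (- 1)) _ (- 1) 0) => //.
    by rewrite oppr_eq0 oner_eq0.
  by rewrite sv_brLM_opp add0r.
- exact: phiN0.
- apply: (@phiU_scale_of_br (bL 2) (bL (- 2)) _ ((2 ^+ 3 - 2)%:~R / 12%:R)
    ((- (2 * 2))%:~R *: E (bL 0))) => //; last exact: sv_brLL_opp.
  + by rewrite mulf_neq0 ?invr_eq0 ?intr_eq0 ?pnatr_eq0.
  + by rewrite linearZ /= phiL0 !scalerA mulrC.
- apply: (@phiU_scale_of_br (bL 2) (bN (- 2)) _ (2 ^+ 2 - 2)%:~R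
    ((- 2)%:~R *: E (bN 0))) => //; last exact: sv_brLN_opp.
  + by rewrite intr_eq0.
  + by rewrite linearZ /= phiN0 !scalerA mulrC.
- apply: (@phiU_scale_of_br (bN 1) (bN (- 1)) _ (- 1) 0) => //.
    by rewrite oppr_eq0 oner_eq0.
  by rewrite sv_brNN_opp add0r.
Qed.

End Eigenvalue.

Lemma degree0_half_derivation_scalar : exists a, forall x, phi x = a *: x.
Proof.
have [a phiU_nz] := phiU_nonzero_degree_scale.
by exists a; apply: linear_basis_scale => b; exact: phiU_scale.
Qed.

End DegreeZero.

(* The base field is C, realised as R[i] for R : realType (the real numbers). *)
Theorem mainTheorem1 (R : realType) :
  (* Delta_0 = <Id> *)
  (forall phi : {linear sv R[i] -> sv R[i]},
     (half_derivation phi /\ has_degree2 0 phi) <->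
     (exists c : R[i], forall x, phi x = c *: x))
  /\
  (* Delta_j = 0 for j in Z \ {0} *)
  (forall (j : int), j != 0 ->
     forall phi : {linear sv R[i] -> sv R[i]},
       half_derivation phi -> has_degree2 (2 * j) phi -> forall x, phi x = 0).
Proof.
split=> [phi|j j_neq0 phi phi_half phi_deg].
  split=> [[phi_half phi_deg]|[c phiE]]; last exact: scale_half_derivation phiE.
  exact: degree0_half_derivation_scalar phi_half phi_deg.
exact: nonzero_degree_half_derivation_eq0 j_neq0 phi_half phi_deg.
Qed.
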